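(* Let $(M,g)$ be a $5$-dimensional Einstein manifold. Then for all $i,j$, $$\Big(\frac{\tau^3}{25}+\frac{\tau}{5}|R|^2\Big)g_{ij}-2\tau R_{iabc}R_{jabc}-4\check{R}_{ij}-4\hat{R}_{ij}+8\mathring{R}_{ij}=0.$$
   Context: Conventions: $R(X,Y)Z=[\nabla_X,\nabla_Y]Z-\nabla_{[X,Y]}Z$ for the Levi-Civita connection; components w.r.t. a local orthonormal frame, $R_{abcd}=g(R(e_a,e_b)e_c,e_d)$, $\rho_{ij}=R_{aija}$, $\tau=\rho_{aa}$, summation over repeated indices. Einstein means $\rho_{ij}=\frac{\tau}{\dim M}g_{ij}$. Notation: $|R|^2=R_{abcd}R_{abcd}$, $\check R_{ij}=R_{iuvj}R_{abcu}R_{abcv}$, $\hat R_{ij}=R_{ibac}R_{jbuv}R_{acuv}$, $\mathring R_{ij}=R_{iabc}R_{jubv}R_{aucv}$. *)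

(* Pointwise (algebraic) model of the curvature tensor of a
   Riemannian manifold, written in a local orthonormal frame e_1..e_n,
   so g_ij = delta_ij. *)
From HB Require Import structures.
From mathcomp Require Import all_boot all_order all_algebra.
Set Implicit Arguments. Unset Strict Implicit. Unset Printing Implicit Defensive.
Import Order.TTheory GRing.Theory Num.Theory.
Local Open Scope ring_scope.

(* components R_abcd = g(R(e_a,e_b)e_c, e_d) *)
Definition curv (R : realFieldType) (n : nat) := 'I_n -> 'I_n -> 'I_n -> 'I_n -> R.

Definition gmet (R : realFieldType) (n : nat) (i j : 'I_n) : R := (i == j)%:R.

Definition is_curvature_tensor (R : realFieldType) (n : nat) (Rm : curv R n) : Prop :=
  [/\ (forall a b c d, Rm a b c d = - Rm b a c d),
      (forall a b c d, Rm a b c d = - Rm a b d c),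
      (forall a b c d, Rm a b c d = Rm c d a b)
    & (forall a b c d, Rm a b c d + Rm b c a d + Rm c a b d = 0)].

Definition ricci (R : realFieldType) (n : nat) (Rm : curv R n) (i j : 'I_n) : R :=
  \sum_(a < n) Rm a i j a.

Definition scal (R : realFieldType) (n : nat) (Rm : curv R n) : R :=
  \sum_(a < n) ricci Rm a a.

Definition is_einstein (R : realFieldType) (n : nat) (Rm : curv R n) : Prop :=
  forall i j, ricci Rm i j = scal Rm / n%:R * gmet R i j.

Definition normsq (R : realFieldType) (n : nat) (Rm : curv R n) : R :=
  \sum_(a < n) \sum_(b < n) \sum_(c < n) \sum_(d < n) Rm a b c d * Rm a b c d.

Definition RR (R : realFieldType) (n : nat) (Rm : curv R n) (i j : 'I_n) : R :=
  \sum_(a < n) \sum_(b < n) \sum_(c < n) Rm i a b c * Rm j a b c.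

Definition Rcheck (R : realFieldType) (n : nat) (Rm : curv R n) (i j : 'I_n) : R :=
  \sum_(u < n) \sum_(v < n) \sum_(a < n) \sum_(b < n) \sum_(c < n)
    Rm i u v j * Rm a b c u * Rm a b c v.

Definition Rhat (R : realFieldType) (n : nat) (Rm : curv R n) (i j : 'I_n) : R :=
  \sum_(a < n) \sum_(b < n) \sum_(c < n) \sum_(u < n) \sum_(v < n)
    Rm i b a c * Rm j b u v * Rm a c u v.

Definition Rring (R : realFieldType) (n : nat) (Rm : curv R n) (i j : 'I_n) : R :=
  \sum_(a < n) \sum_(b < n) \sum_(c < n) \sum_(u < n) \sum_(v < n)
    Rm i a b c * Rm j u b v * Rm a u c v.

(* In an orthonormal frame the identity is, for each (i, j), a cubic polynomial
   identity in the components R_abcd, to be proved on the linear subspace cut out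
   by the symmetries of a curvature tensor and the Einstein equations. Modulo
   (anti)symmetry R is given by the components R_abcd with a < b, c < d and
   (a, b) <= (c, d); Gaussian elimination over Z on the first Bianchi identities
   and the Einstein equations writes all of them in terms of 35 free components
   and t = - tau / 10, and in these coordinates the left-hand side expands to the
   zero polynomial. Elimination and normalization are run by reflection; only
   their soundness is proved. *)

From Stdlib Require Import ZArith.
From HB Require Import structures.
From mathcomp Require Import all_boot all_order all_algebra ssrZ.
From mathcomp Require Import ring lra.
Set Implicit Arguments. Unset Strict Implicit. Unset Printing Implicit Defensive.
Import GRing.Theory Num.Theory.
Local Open Scope ring_scope.
(* ssrint rebinds the [%Z] key to [int]. *)
Local Delimit Scope Z_scope with coqZ.

Definition zr {R : pzRingType} (z : Z) : R := (int_of_Z z)%:~R.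

Lemma zr0 (R : pzRingType) : zr 0%coqZ = 0 :> R.
Proof. by []. Qed.

Lemma zrN1 (R : pzRingType) : zr (-1)%coqZ = -1 :> R.
Proof. by []. Qed.

Lemma zr_pos (R : pzRingType) (p : positive) : zr (Zpos p) = (Pos.to_nat p)%:R :> R.
Proof. by []. Qed.

Lemma zr_neg (R : pzRingType) (p : positive) : zr (Zneg p) = - (Pos.to_nat p)%:R :> R.
Proof. by rewrite /zr /=; have /ltP/prednK {2}<- := Pos2Nat.is_pos p. Qed.

Lemma zrD (R : pzRingType) (y z : Z) : zr (y + z)%coqZ = zr y + zr z :> R.
Proof. by rewrite /zr rmorphD intrD. Qed.

Lemma zrM (R : pzRingType) (y z : Z) : zr (y * z)%coqZ = zr y * zr z :> R.
Proof. by rewrite /zr rmorphM intrM. Qed.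

Lemma zrN (R : pzRingType) (z : Z) : zr (- z)%coqZ = - zr z :> R.
Proof. by rewrite /zr rmorphN intrN. Qed.

Lemma zr_eq0 (R : numDomainType) (z : Z) : (zr z == 0 :> R) = (z == 0%coqZ).
Proof. by rewrite /zr intr_eq0 -(can_eq int_of_ZK). Qed.

Section IntegerPolynomials.
Variables (K : eqType) (leK : rel K).

Definition mono := seq K.
Definition poly := seq (Z * mono).

Fixpoint lexle (m n : mono) : bool :=
  match m, n with
  | [::], _ => true
  | _ :: _, [::] => false
  | x :: m', y :: n' => leK x y && (leK y x ==> lexle m' n')
  end.

Definition varp (x : K) : poly := [:: (1%coqZ, [:: x])].
Definition scalep (c : Z) (p : poly) : poly := [seq ((c * t.1)%coqZ, t.2) | t <- p].
Definition mulp (p q : poly) : poly :=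
  [seq ((s.1 * t.1)%coqZ, merge leK s.2 t.2) | s <- p, t <- q].
Definition sump (A : Type) (s : seq A) (f : A -> poly) : poly := flatten (map f s).
Definition prodp (ps : seq poly) : poly := foldr mulp [:: (1%coqZ, [::])] ps.
Definition substp (sigma : K -> poly) (p : poly) : poly :=
  sump p (fun t => scalep t.1 (prodp (map sigma t.2))).

Fixpoint collect (t : Z * mono) (p : poly) : poly :=
  match p with
  | [::] => if t.1 == 0%coqZ then [::] else [:: t]
  | s :: p' => if t.2 == s.2 then collect ((t.1 + s.1)%coqZ, t.2) p'
               else if t.1 == 0%coqZ then collect s p' else t :: collect s p'
  end.

(* Monomials built by [varp] and [mulp] are already sorted, so only the terms
   need sorting. *)
Definition normp (p : poly) : poly :=
  if sort (fun s t => lexle s.2 t.2) p is t :: p'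
  then collect t p' else [::].

Section Evaluation.
Variables (R : comPzRingType) (v : K -> R).

Definition evalm (m : mono) : R := \prod_(x <- m) v x.
Definition evalp (p : poly) : R := \sum_(t <- p) zr t.1 * evalm t.2.

Lemma evalp_cat p q : evalp (p ++ q) = evalp p + evalp q.
Proof. exact: big_cat. Qed.

Lemma evalp_var x : evalp (varp x) = v x.
Proof. by rewrite /evalp /evalm !big_seq1 mul1r. Qed.

Lemma evalp_scale c p : evalp (scalep c p) = zr c * evalp p.
Proof.
by rewrite /evalp big_map mulr_sumr; apply: eq_bigr => t _; rewrite zrM mulrA.
Qed.

Lemma evalp_mul p q : evalp (mulp p q) = evalp p * evalp q.
Proof.
rewrite /evalp /mulp big_allpairs_dep mulr_suml; apply: eq_bigr => s _.
rewrite mulr_sumr; apply: eq_bigr => t _.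
by rewrite zrM /evalm (perm_big _ (permEl (perm_merge _ _ _))) big_cat /=; ring.
Qed.

Lemma evalp_sum (A : Type) (s : seq A) f :
  evalp (sump s f) = \sum_(a <- s) evalp (f a).
Proof. by rewrite /evalp big_flatten big_map. Qed.

Lemma evalp_prod ps : evalp (prodp ps) = \prod_(p <- ps) evalp p.
Proof.
elim: ps => [|p ps IH]; last by rewrite big_cons /= evalp_mul IH.
by rewrite big_nil /evalp /evalm big_seq1 big_nil mulr1.
Qed.

Lemma evalp_collect t p : evalp (collect t p) = zr t.1 * evalm t.2 + evalp p.
Proof.
elim: p t => [|s p IH] [c m] /=; rewrite /evalp ?big_cons.
  by case: eqP => [->|_]; rewrite ?big_nil ?big_seq1 ?zr0 ?mul0r ?addr0.
case: eqP => [->|_]; first by rewrite -/(evalp _) IH zrD /= mulrDl addrA.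
case: eqP => [->|_]; first by rewrite -/(evalp _) IH zr0 mul0r add0r.
by rewrite big_cons -/(evalp _) IH.
Qed.

Lemma evalp_norm p : evalp (normp p) = evalp p.
Proof.
rewrite /normp; set q := sort _ _.
have -> : evalp p = evalp q by rewrite /q /evalp (perm_big _ (permEl (perm_sort _ _))).
by case: q => [|t q] //; rewrite evalp_collect /evalp big_cons.
Qed.

Lemma normp_nil_evalp p : normp p = [::] -> evalp p = 0.
Proof. by move=> h; rewrite -evalp_norm h /evalp big_nil. Qed.

End Evaluation.

Lemma eq_evalp (R : comPzRingType) (v w : K -> R) p : v =1 w -> evalp v p = evalp w p.
Proof.
move=> e; apply: eq_bigr => t _; congr (_ * _).
by apply: eq_bigr => x _; exact: e.
Qed.

Lemma evalp_subst (R : comPzRingType) (v : K -> R) sigma p :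
  evalp v (substp sigma p) = evalp (fun x => evalp v (sigma x)) p.
Proof.
rewrite evalp_sum; apply: eq_bigr => t _.
by rewrite evalp_scale evalp_prod big_map.
Qed.

Fixpoint pick_out (T : Type) (q : pred T) (s : seq T) : option (T * seq T) :=
  if s is t :: s' then
    if q t then Some (t, s') else omap (fun ts => (ts.1, t :: ts.2)) (pick_out q s')
  else None.

Lemma pick_outP (T : eqType) (q : pred T) s t s' :
  pick_out q s = Some (t, s') -> q t /\ perm_eq (t :: s') s.
Proof.
elim: s t s' => [|x s IH] t s' //=; case: ifP => [qx [<- <-] //|_].
case: (pick_out q s) IH => [[y r]|] // IH [<- <-].
have [qy pyr] := IH y r erefl; split=> //.
rewrite -(perm_cons x) in pyr.
exact: perm_trans (permEl (perm_catCA [:: y] [:: x] r)) pyr.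
Qed.

(* A linear term [c x] can be solved for when [c] divides every coefficient. *)
Definition is_pivot (p : poly) (t : Z * mono) : bool :=
  if t is (c, [:: _]) then (c != 0%coqZ) && all (fun s => (s.1 mod c == 0)%coqZ) p
  else false.

Definition pivot (p : poly) : option (K * poly) :=
  if pick_out (is_pivot p) p is Some ((c, [:: x]), rest)
  then Some (x, [seq ((- (s.1 / c))%coqZ, s.2) | s <- rest])
  else None.

Definition updp (x : K) (fx : poly) (y : K) : poly := if y == x then fx else varp y.

Definition elim_step (sigma : K -> poly) (r : poly) : K -> poly :=
  if pivot (normp (substp sigma r)) is Some (x, fx)
  then fun y => normp (substp (updp x fx) (sigma y))
  else sigma.

Definition eliminate (rels : seq poly) : K -> poly := foldl elim_step varp rels.

Section Elimination.
Variables (R : numDomainType) (v : K -> R).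

Lemma evalp_pivot p x fx : pivot p = Some (x, fx) -> evalp v p = 0 -> evalp v fx = v x.
Proof.
rewrite /pivot; case E: pick_out => [[[c [|y [|]]] rest]|] //= [<- <-].
have [/= /andP [c0 /allP cdvd] prest] := pick_outP E.
have evalp_rest : evalp v rest = - zr c * evalp v [seq ((- (s.1 / c))%coqZ, s.2) | s <- rest].
  rewrite /evalp big_map mulr_sumr big_seq [RHS]big_seq; apply: eq_bigr => t trest.
  have /eqP tdvd : (t.1 mod c == 0)%coqZ.
    by apply: cdvd; rewrite -(perm_mem prest) inE trest orbT.
  by rewrite zrN mulrA mulrNN -zrM -(proj2 (Z.div_exact _ _ (elimN eqP c0))).
rewrite /evalp -(perm_big _ prest) big_cons -/(evalp v rest) evalp_rest /evalm big_seq1 /=.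
move=> /eqP; rewrite mulNr -mulrN -mulrDr mulf_eq0 zr_eq0 (negPf c0) /=.
by rewrite addr_eq0 opprK => /eqP ->.
Qed.

Lemma evalp_elim_step sigma r :
  (forall x, evalp v (sigma x) = v x) -> evalp v r = 0 ->
  forall x, evalp v (elim_step sigma r x) = v x.
Proof.
move=> hsigma hr; rewrite /elim_step.
case E: pivot => [[y fy]|] // x.
have hfy : evalp v fy = v y.
  apply: evalp_pivot E _.
  by rewrite evalp_norm evalp_subst (eq_evalp _ hsigma).
rewrite evalp_norm evalp_subst -hsigma; apply: eq_evalp => z.
by rewrite /updp; case: eqP => [->|_]; rewrite ?evalp_var.
Qed.

Lemma evalp_eliminate rels :
  {in rels, forall r, evalp v r = 0} -> forall x, evalp v (eliminate rels x) = v x.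
Proof.
rewrite /eliminate; have : forall x, evalp v (varp x) = v x by exact: evalp_var.
elim: rels varp => [|r rels IH] sigma hsigma hrels //=.
apply: IH => [|s srels]; last by apply: hrels; rewrite inE srels orbT.
by apply: evalp_elim_step => //; apply: hrels; rewrite inE eqxx.
Qed.

End Elimination.
End IntegerPolynomials.

(* [None] stands for the auxiliary scalar [t = - tau / 10], in terms of which the
   Einstein condition [rho_ij = - 2 t g_ij] has integer coefficients. *)
Definition var := option (nat * nat * nat * nat).

Definition var_le (x y : var) : bool :=
  match x, y with
  | None, _ => true
  | Some _, None => false
  | Some (a, b, c, d), Some (a', b', c', d') =>
    lexle leq [:: a; b; c; d] [:: a'; b'; c'; d']
  end.

Definition I5 := iota 0 5.
Definition sum5p (f : nat -> poly var) : poly var := sump I5 f.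
Definition tvar : poly var := varp None.

Definition signed_pair (a b : nat) : Z * (nat * nat) :=
  if (a < b)%N then (1%coqZ, (a, b)) else ((-1)%coqZ, (b, a)).

(* The component [R_abcd] as a signed canonical variable: [a' < b'], [c' < d']
   and [(a', b') <= (c', d')]. *)
Definition canon (a b c d : nat) : poly var :=
  if (a == b) || (c == d) then [::] else
  let: (s, (a', b')) := signed_pair a b in
  let: (s', (c', d')) := signed_pair c d in
  [:: ((s * s')%coqZ, [:: if lexle leq [:: a'; b'] [:: c'; d']
                           then Some (a', b', c', d') else Some (c', d', a', b')])].

Definition bianchi_rels : seq (poly var) :=
  flatten [seq flatten [seq flatten [seq
    [seq canon a b c d ++ canon b c a d ++ canon c a b d | d <- I5]
  | c <- I5] | b <- I5] | a <- I5].

Definition riccip (i j : nat) : poly var := sum5p (fun a => canon a i j a).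

Definition einstein_rels : seq (poly var) :=
  [seq riccip i j ++ scalep (if i == j then 2 else 0)%coqZ tvar | i <- I5, j <- I5].

Definition curv_val (R : realFieldType) (Rm : curv R 5) (t : R) (x : var) : R :=
  if x is Some (a, b, c, d) then Rm (inord a) (inord b) (inord c) (inord d) else t.

Lemma evalp_sum5 (R : comPzRingType) (v : var -> R) (f : nat -> poly var) (F : 'I_5 -> R) :
  (forall a : 'I_5, evalp v (f a) = F a) -> evalp v (sum5p f) = \sum_(a < 5) F a.
Proof.
by move=> h; rewrite evalp_sum (_ : I5 = index_iota 0 5) // big_mkord; apply: eq_bigr.
Qed.

Section CurvatureRelations.
Variables (R : realFieldType) (Rm : curv R 5) (t : R).
Hypothesis hR : is_curvature_tensor Rm.

Lemma curv_aa0 a c d : Rm a a c d = 0.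
Proof. by case: hR => hA _ _ _; have := hA a a c d; lra. Qed.

Lemma signed_pair_l a b x y : Rm (inord a) (inord b) x y
  = zr (signed_pair a b).1 * Rm (inord (signed_pair a b).2.1) (inord (signed_pair a b).2.2) x y.
Proof.
case: hR => hA _ _ _; rewrite /signed_pair; case: ifP => _ /=; first by rewrite mul1r.
by rewrite zrN1 mulN1r -hA.
Qed.

Lemma signed_pair_r a b x y : Rm x y (inord a) (inord b)
  = zr (signed_pair a b).1 * Rm x y (inord (signed_pair a b).2.1) (inord (signed_pair a b).2.2).
Proof.
case: hR => _ hB _ _; rewrite /signed_pair; case: ifP => _ /=; first by rewrite mul1r.
by rewrite zrN1 mulN1r -hB.
Qed.

Lemma evalp_canon a b c d :
  evalp (curv_val Rm t) (canon a b c d) = Rm (inord a) (inord b) (inord c) (inord d).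
Proof.
rewrite /canon; case: (a =P b) => [<-|_] /=; first by rewrite curv_aa0 /evalp big_nil.
case: (c =P d) => [<-|_] /=.
  by case: hR => _ _ hS _; rewrite hS curv_aa0 /evalp big_nil.
rewrite signed_pair_l signed_pair_r.
case: (signed_pair a b) => s [a' b']; case: (signed_pair c d) => s' [c' d'] /=.
rewrite /evalp /evalm !big_seq1 zrM; case: ifP => _; first by rewrite mulrA.
by case: hR => _ _ hS _; rewrite hS mulrA.
Qed.

Lemma bianchi_rels_vanish : {in bianchi_rels, forall r, evalp (curv_val Rm t) r = 0}.
Proof.
move=> r /flatten_mapP [a _ /flatten_mapP [b _ /flatten_mapP [c _ /mapP [d _ ->]]]].
by case: hR => _ _ _ hBian; rewrite !evalp_cat !evalp_canon addrA hBian.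
Qed.

End CurvatureRelations.

Lemma einstein_rels_vanish (R : realFieldType) (Rm : curv R 5) :
  is_curvature_tensor Rm -> is_einstein Rm ->
  {in einstein_rels, forall r, evalp (curv_val Rm (- (scal Rm / 10%:R))) r = 0}.
Proof.
move=> hR hE r /allpairsP [[i j] [+ + ->]]; rewrite /= !mem_iota /= => i5 j5.
change (evalp (curv_val Rm (- (scal Rm / 10%:R)))
          (riccip i j ++ scalep (if i == j then 2 else 0)%coqZ tvar) = 0).
rewrite evalp_cat evalp_scale evalp_var.
have -> : evalp (curv_val Rm (- (scal Rm / 10%:R))) (riccip i j) = ricci Rm (inord i) (inord j).
  by apply: evalp_sum5 => a; rewrite evalp_canon // inord_val.
rewrite hE /gmet -val_eqE /= !inordK //.
by case: (i == j); rewrite /= ?zr_pos ?zr0; cbv [Pos.to_nat Pos.iter_op Nat.add];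
  field; rewrite ?pnatr_eq0.
Qed.

Section CurvaturePolynomials.
Variable X : nat -> nat -> nat -> nat -> poly var.

Definition normsqp : poly var :=
  sum5p (fun a => sum5p (fun b => sum5p (fun c => sum5p (fun d =>
    mulp var_le (X a b c d) (X a b c d))))).

Definition RRp (i j : nat) : poly var :=
  sum5p (fun a => sum5p (fun b => sum5p (fun c => mulp var_le (X i a b c) (X j a b c)))).

Definition Rcheckp (i j : nat) : poly var :=
  sum5p (fun u => sum5p (fun v => mulp var_le (X i u v j)
    (normp var_le (sum5p (fun a => sum5p (fun b => sum5p (fun c =>
       mulp var_le (X a b c u) (X a b c v)))))))).

Definition Rhatp (i j : nat) : poly var :=
  sum5p (fun a => sum5p (fun b => sum5p (fun c => mulp var_le (X i b a c)
    (normp var_le (sum5p (fun u => sum5p (fun v => mulp var_le (X j b u v) (X a c u v)))))))).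

Definition Rringp (i j : nat) : poly var :=
  sum5p (fun a => sum5p (fun b => sum5p (fun c => mulp var_le (X i a b c)
    (normp var_le (sum5p (fun u => sum5p (fun v => mulp var_le (X j u b v) (X a u c v)))))))).

(* The left-hand side of the identity, with [tau = - 10 t]. *)
Definition identityp (i j : nat) : poly var :=
  (if i == j then scalep (-40)%coqZ (prodp var_le [:: tvar; tvar; tvar])
                  ++ scalep (-2)%coqZ (mulp var_le tvar normsqp) else [::])
  ++ scalep 20%coqZ (mulp var_le tvar (RRp i j)) ++ scalep (-4)%coqZ (Rcheckp i j)
  ++ scalep (-4)%coqZ (Rhatp i j) ++ scalep 8%coqZ (Rringp i j).

Variables (R : realFieldType) (Rm : curv R 5) (v : var -> R).
Hypothesis evalp_X : forall a b c d : 'I_5, evalp v (X a b c d) = Rm a b c d.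

Lemma evalp_normsqp : evalp v normsqp = normsq Rm.
Proof. by do 4 apply: evalp_sum5 => ?; rewrite evalp_mul !evalp_X. Qed.

Lemma evalp_RRp (i j : 'I_5) : evalp v (RRp i j) = RR Rm i j.
Proof. by do 3 apply: evalp_sum5 => ?; rewrite evalp_mul !evalp_X. Qed.

Lemma evalp_mul_sum5 p (f : nat -> poly var) (F : 'I_5 -> R) :
  (forall a : 'I_5, evalp v (mulp var_le p (f a)) = F a) ->
  evalp v (mulp var_le p (sum5p f)) = \sum_(a < 5) F a.
Proof.
move=> h; rewrite evalp_mul (evalp_sum5 (F := fun a => evalp v (f a))) // mulr_sumr.
by apply: eq_bigr => a _; rewrite -(evalp_mul var_le).
Qed.

Lemma evalp_Rcheckp (i j : 'I_5) : evalp v (Rcheckp i j) = Rcheck Rm i j.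
Proof.
do 2 apply: evalp_sum5 => ?; rewrite evalp_mul evalp_norm -(evalp_mul var_le).
by do 3 apply: evalp_mul_sum5 => ?; rewrite !evalp_mul !evalp_X mulrA.
Qed.

Lemma evalp_Rhatp (i j : 'I_5) : evalp v (Rhatp i j) = Rhat Rm i j.
Proof.
do 3 apply: evalp_sum5 => ?; rewrite evalp_mul evalp_norm -(evalp_mul var_le).
by do 2 apply: evalp_mul_sum5 => ?; rewrite !evalp_mul !evalp_X mulrA.
Qed.

Lemma evalp_Rringp (i j : 'I_5) : evalp v (Rringp i j) = Rring Rm i j.
Proof.
do 3 apply: evalp_sum5 => ?; rewrite evalp_mul evalp_norm -(evalp_mul var_le).
by do 2 apply: evalp_mul_sum5 => ?; rewrite !evalp_mul !evalp_X mulrA.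
Qed.

Lemma evalp_identityp (i j : 'I_5) :
  let t := v None in
  evalp v (identityp i j)
  = (- 40%:R * t ^+ 3 - 2%:R * t * normsq Rm) * gmet R i j + 20%:R * t * RR Rm i j
    - 4%:R * Rcheck Rm i j - 4%:R * Rhat Rm i j + 8%:R * Rring Rm i j.
Proof.
rewrite /identityp !evalp_cat !evalp_scale evalp_mul evalp_RRp.
rewrite evalp_Rcheckp evalp_Rhatp evalp_Rringp /tvar evalp_var.
rewrite /gmet (_ : (i == j) = (nat_of_ord i == nat_of_ord j)) //; case: ifP => _.
  rewrite evalp_cat !evalp_scale evalp_prod evalp_mul evalp_normsqp !big_cons big_nil !evalp_var.
  by rewrite !zr_pos !zr_neg; cbv [Pos.to_nat Pos.iter_op Nat.add nat_of_bool]; ring.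
by rewrite /evalp big_nil !zr_pos !zr_neg;
  cbv [Pos.to_nat Pos.iter_op Nat.add nat_of_bool]; ring.
Qed.

End CurvaturePolynomials.

Definition table := seq (seq (seq (seq (poly var)))).

Definition tabulate (f : nat -> nat -> nat -> nat -> poly var) : table :=
  [seq [seq [seq [seq f a b c d | d <- I5] | c <- I5] | b <- I5] | a <- I5].

Definition lookup (T : table) (a b c d : nat) : poly var :=
  nth [::] (nth [::] (nth [::] (nth [::] T a) b) c) d.

Lemma lookup_tabulate f (a b c d : 'I_5) :
  lookup (tabulate f) a b c d = f a b c d.
Proof. by rewrite /lookup !(nth_map 0%N) ?size_iota ?ltn_ord // !nth_iota. Qed.

Definition einstein5_table : table :=
  let sigma := eliminate var_le (bianchi_rels ++ einstein_rels) in
  tabulate (fun a b c d => normp var_le (substp var_le sigma (canon a b c d))).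

Definition identity_normalizes (T : table) : bool :=
  all (fun i => all (fun j => normp var_le (identityp (lookup T) i j) == [::]) I5) I5.

Lemma einstein5_identity_normalizes : identity_normalizes einstein5_table.
Proof. by vm_compute. Qed.

Theorem corollary4p2 (R : realFieldType) (Rm : curv R 5)
    (hR : is_curvature_tensor Rm) (hE : is_einstein Rm) (i j : 'I_5) :
  (scal Rm ^+ 3 / 25%:R + scal Rm / 5%:R * normsq Rm) * gmet R i j
  - 2%:R * scal Rm * RR Rm i j - 4%:R * Rcheck Rm i j - 4%:R * Rhat Rm i j
  + 8%:R * Rring Rm i j = 0.
Proof.
set t := - (scal Rm / 10%:R).
have evalp_table (a b c d : 'I_5) :
    evalp (curv_val Rm t) (lookup einstein5_table a b c d) = Rm a b c d.
  rewrite -{2}[a]inord_val -{2}[b]inord_val -{2}[c]inord_val -{2}[d]inord_val.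
  rewrite -(evalp_canon t hR) lookup_tabulate evalp_norm evalp_subst.
  apply: eq_evalp => x; apply: evalp_eliminate => r.
  by rewrite mem_cat => /orP [];
    [exact: bianchi_rels_vanish | exact: einstein_rels_vanish].
have mem_I5 (k : 'I_5) : nat_of_ord k \in I5 by rewrite mem_iota ltn_ord.
have /eqP/(normp_nil_evalp (curv_val Rm t)) :=
  allP (allP einstein5_identity_normalizes i (mem_I5 i)) j (mem_I5 j).
rewrite (evalp_identityp evalp_table) => <-.
by rewrite /t /=; field; rewrite ?pnatr_eq0.
Qed.
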